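(* Let $H\ge1$, $c_a\ge0$, $c_R\ge0$, and for $h=1,\dots,H$ let $p_{h,0},p_{h,1}\in[0,1]$ with $p_{h,0}\ge p_{h,1}$. Define $V_{H+1}=0$ and, for $h=H,\dots,1$, $V_h=\min\{c_a+p_{h,1}c_R+(1-p_{h,1})V_{h+1},\ p_{h,0}c_R+(1-p_{h,0})V_{h+1}\}$. Then for all $1\le h\le H$, $$\Big(1-\prod_{i=h}^H(1-p_{i,1})\Big)c_R\le V_h\le\Big(1-\prod_{i=h}^H(1-p_{i,0})\Big)c_R.$$ *)

From Stdlib Require Import Reals Lra Lia.
Open Scope R_scope.

(* Value recursion: V_{H+1} = 0,
   V_h = min (ca + p1 h * cR + (1 - p1 h) V_{h+1}) (p0 h * cR + (1 - p0 h) V_{h+1}).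
   Vaux k computes V_{H+1-k}. *)
Fixpoint Vaux (H : nat) (ca cR : R) (p0 p1 : nat -> R) (k : nat) : R :=
  match k with
  | O => 0
  | S k' =>
      let h := (H - k')%nat in
      let v := Vaux H ca cR p0 p1 k' in
      Rmin (ca + p1 h * cR + (1 - p1 h) * v) (p0 h * cR + (1 - p0 h) * v)
  end.

Definition V (H : nat) (ca cR : R) (p0 p1 : nat -> R) (h : nat) : R :=
  Vaux H ca cR p0 p1 (H + 1 - h).

Fixpoint prod_from (f : nat -> R) (h : nat) (n : nat) : R :=
  match n with
  | O => 1
  | S n' => f h * prod_from f (S h) n'
  end.

Definition prodR (f : nat -> R) (h H : nat) : R := prod_from f h (H + 1 - h).

(* If (1 - Q1) cR <= V_{h+1} <= (1 - Q0) cR,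
   where Qj is the survival product from h+1 on, then the "no action" branch
   p0 cR + (1 - p0) V_{h+1} already gives the upper bound at h, while both
   branches of the minimum are at least (1 - (1 - p1) Q1) cR: the action
   branch because ca >= 0, the other one because p0 >= p1. *)

From Stdlib Require Import Reals Lra Lia Psatz.
Open Scope R_scope.

Lemma prod_from_unit_interval (f : nat -> R) (h n : nat) :
  (forall i, (h <= i < h + n)%nat -> 0 <= f i <= 1) ->
  0 <= prod_from f h n <= 1.
Proof.
  revert h; induction n as [|n IH]; intros h Hf; simpl; [lra|].
  assert (Hh := Hf h ltac:(lia)).
  assert (Htail := IH (S h) ltac:(intros i Hi; apply Hf; lia)).
  split; nra.
Qed.

Lemma Rmin_step_lower (ca cR q0 q1 Q v : R) :
  0 <= ca -> 0 <= cR -> 0 <= q1 -> q1 <= q0 -> q0 <= 1 -> 0 <= Q ->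
  (1 - Q) * cR <= v ->
  (1 - (1 - q1) * Q) * cR <= Rmin (ca + q1 * cR + (1 - q1) * v) (q0 * cR + (1 - q0) * v).
Proof.
  intros Hca HcR Hq1 Hq10 Hq0 HQ Hv.
  apply Rmin_glb.
  - assert ((1 - q1) * ((1 - Q) * cR) <= (1 - q1) * v) by (apply Rmult_le_compat_l; lra).
    nra.
  - assert ((1 - q0) * ((1 - Q) * cR) <= (1 - q0) * v) by (apply Rmult_le_compat_l; lra).
    assert (0 <= Q * cR) by nra.
    nra.
Qed.

Lemma Rmin_step_upper (ca cR q0 q1 Q v : R) :
  q0 <= 1 -> v <= (1 - Q) * cR ->
  Rmin (ca + q1 * cR + (1 - q1) * v) (q0 * cR + (1 - q0) * v) <= (1 - (1 - q0) * Q) * cR.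
Proof.
  intros Hq0 Hv.
  eapply Rle_trans; [apply Rmin_r|].
  assert ((1 - q0) * v <= (1 - q0) * ((1 - Q) * cR)) by (apply Rmult_le_compat_l; lra).
  nra.
Qed.

Lemma prod_from_shift_down (f : nat -> R) (H k : nat) :
  (k <= H)%nat ->
  prod_from f (H + 1 - S k) (S k) = f (H - k)%nat * prod_from f (H + 1 - k) k.
Proof.
  intros Hk.
  replace (H + 1 - S k)%nat with (H - k)%nat by lia.
  simpl; replace (S (H - k)) with (H + 1 - k)%nat by lia.
  reflexivity.
Qed.

Lemma survival_unit_interval (H : nat) (p : nat -> R) (k : nat) :
  (k <= H)%nat -> (forall h, (1 <= h <= H)%nat -> 0 <= p h <= 1) ->
  0 <= prod_from (fun i => 1 - p i) (H + 1 - k) k <= 1.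
Proof.
  intros Hk Hp01; apply prod_from_unit_interval.
  intros i Hi; assert (Hpi := Hp01 i ltac:(lia)); lra.
Qed.

Lemma Vaux_bounds (H : nat) (ca cR : R) (p0 p1 : nat -> R) :
  0 <= ca -> 0 <= cR ->
  (forall h, (1 <= h <= H)%nat ->
     0 <= p0 h <= 1 /\ 0 <= p1 h <= 1 /\ p1 h <= p0 h) ->
  forall k, (k <= H)%nat ->
  (1 - prod_from (fun i => 1 - p1 i) (H + 1 - k) k) * cR <= Vaux H ca cR p0 p1 k /\
  Vaux H ca cR p0 p1 k <= (1 - prod_from (fun i => 1 - p0 i) (H + 1 - k) k) * cR.
Proof.
  intros Hca HcR Hp k; induction k as [|k IH]; intros Hk; [simpl; lra|].
  destruct (IH ltac:(lia)) as [Hlow Hup].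
  rewrite !prod_from_shift_down by lia; simpl Vaux.
  destruct (Hp (H - k)%nat ltac:(lia)) as [Hp0 [Hp1 Hp10]].
  assert (HQ1 := survival_unit_interval H p1 k ltac:(lia)
    ltac:(intros h Hh; apply (Hp h Hh))).
  split.
  - apply Rmin_step_lower; lra.
  - apply Rmin_step_upper; lra.
Qed.

Theorem mainTheorem4 (H : nat) (ca cR : R) (p0 p1 : nat -> R) :
  (1 <= H)%nat -> 0 <= ca -> 0 <= cR ->
  (forall h, (1 <= h <= H)%nat ->
     0 <= p0 h <= 1 /\ 0 <= p1 h <= 1 /\ p1 h <= p0 h) ->
  forall h, (1 <= h <= H)%nat ->
    (1 - prodR (fun i => 1 - p1 i) h H) * cR <= V H ca cR p0 p1 h /\
    V H ca cR p0 p1 h <= (1 - prodR (fun i => 1 - p0 i) h H) * cR.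
Proof.
  intros _ Hca HcR Hp h Hh.
  unfold V, prodR.
  pose proof (Vaux_bounds H ca cR p0 p1 Hca HcR Hp (H + 1 - h) ltac:(lia)) as Hbounds.
  replace (H + 1 - (H + 1 - h))%nat with h in Hbounds by lia.
  exact Hbounds.
Qed.
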